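(* Under the setting and hypotheses of the convergence theorem stated in the context (existence of a valid solution $\boldsymbol{x}^\star$ and priors satisfying $1\ge q_v>1-\epsilon_v$ if $\mathtt{x}^\star_v=0$, $0\le q_v<\epsilon_v$ if $\mathtt{x}^\star_v=1$), after the first BP iteration $$\mathsf{r}^{(1)}_v(\mathtt{x}^\star_v)>\mathsf{r}^{(1)}_v(1-\mathtt{x}^\star_v)\quad\text{for all } v\in\mathcal{V},$$ i.e., $\widehat{x}^{(1)}_v=\mathtt{x}^\star_v$ for all $v\in\mathcal{V}$.
   Context: Factor graph: a finite set $\mathcal{V}$ of binary variables $x_v\in\{0,1\}$ and a finite set $\mathcal{J}$ of factors; each factor $J$ has a nonempty neighborhood $\mathcal{V}_J\subseteq\mathcal{V}$ and a function $\mathsf{g}_J:\{0,1\}^{|\mathcal{V}_J|}\to\{0,1\}$. For $v\in\mathcal{V}$, $\mathcal{J}_v=\{J: v\in\mathcal{V}_J\}$, assumed nonempty. A valid solution is $\boldsymbol{x}^\star\in\{0,1\}^{\mathcal{V}}$ with $\mathsf{g}_J(\boldsymbol{x}^\star_{\mathcal{V}_J})=1$ for all $J$. Define $\kappa_v=\max_{J\in\mathcal{J}_v}|\{\mathbf{x}_{\mathcal{V}_J}:\mathsf{g}_J(\mathbf{x}_{\mathcal{V}_J})=1\}|$ and $\epsilon_v=1/(1+\kappa_v^{|\mathcal{J}_v|})$. BP: priors $\mathrm{P}_v(0)=q_v$, $\mathrm{P}_v(1)=1-q_v$; $\mathsf{m}^{(0)}_{v\to J}(0)=q_v$, $\mathsf{m}^{(0)}_{v\to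 J}(1)=1-q_v$; for $n\ge1$, $\mathsf{m}^{(n)}_{J\to v}(x)=\mathtt{C}^{(n)}_{J\to v}\sum_{\mathbf{x}_{\mathcal{V}_J\setminus v}}\mathsf{g}_J(\mathbf{x}_{\mathcal{V}_J\setminus v},x_v=x)\prod_{y\in\mathcal{V}_J\setminus v}\mathsf{m}^{(n-1)}_{y\to J}(x_y)$ and $\mathsf{m}^{(n)}_{v\to J}(x)=\mathtt{C}^{(n)}_{v\to J}\mathrm{P}_v(x)\prod_{I\in\mathcal{J}_v\setminus J}\mathsf{m}^{(n)}_{I\to v}(x)$, with positive normalizing constants making $\mathsf{m}(0)+\mathsf{m}(1)=1$. Marginals $\mathsf{r}^{(n)}_v(x)=\mathrm{P}_v(x)\prod_{J\in\mathcal{J}_v}\mathsf{m}^{(n)}_{J\to v}(x)$; decision $\widehat{x}^{(n)}_v=\mathsf{1}\{\mathsf{r}^{(n)}_v(1)\ge\mathsf{r}^{(n)}_v(0)\}$. *)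

From HB Require Import structures.
From mathcomp Require Import all_boot all_order all_algebra.
Set Implicit Arguments. Unset Strict Implicit. Unset Printing Implicit Defensive.
Import Order.TTheory GRing.Theory Num.Theory.
Local Open Scope ring_scope.

(* Binary values {0,1} are encoded as bool: false = 0, true = 1. *)

Definition lconf (V : finType) (A : {set V}) := {ffun {v : V | v \in A} -> bool}.

Definition restr (V : finType) (A : {set V}) (x : V -> bool) : lconf A :=
  [ffun y => x (val y)].

Definition adj (V F : finType) (nb : F -> {set V}) (v : V) : {set F} :=
  [set J | v \in nb J].

Definition kappa (V F : finType) (nb : F -> {set V})
  (g : forall J : F, lconf (nb J) -> bool) (v : V) : nat :=
  \max_(J in adj nb v) #|[set c : lconf (nb J) | g J c]|.

Definition eps (R : realFieldType) (V F : finType) (nb : F -> {set V})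
  (g : forall J : F, lconf (nb J) -> bool) (v : V) : R :=
  1 / (1 + ((kappa g v) ^ #|adj nb v|)%N%:R).

Definition prior (R : realFieldType) (V : finType) (q : V -> R) (v : V) (x : bool) : R :=
  if x then 1 - q v else q v.

Definition normalize (R : realFieldType) (U : bool -> R) (x : bool) : R :=
  U x / (U false + U true).

(* factor-to-variable update, from variable-to-factor messages mv y J x *)
Definition fmsg (R : realFieldType) (V F : finType) (nb : F -> {set V})
  (g : forall J : F, lconf (nb J) -> bool) (mv : V -> F -> bool -> R)
  (J : F) (v : V) : bool -> R :=
  normalize (fun x : bool =>
    \sum_(c : lconf (nb J) | [forall y, (val y == v) ==> (c y == x)])
       (g J c)%:R * \prod_(y : {y : V | y \in nb J} | val y != v) mv (val y) J (c y)).

(* variable-to-factor update, from factor-to-variable messages mf I v x *)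
Definition vmsg (R : realFieldType) (V F : finType) (nb : F -> {set V})
  (q : V -> R) (mf : F -> V -> bool -> R) (v : V) (J : F) : bool -> R :=
  normalize (fun x : bool =>
    prior q v x * \prod_(I in adj nb v | I != J) mf I v x).

Fixpoint vmsgs (R : realFieldType) (V F : finType) (nb : F -> {set V})
  (g : forall J : F, lconf (nb J) -> bool) (q : V -> R) (n : nat)
  : V -> F -> bool -> R :=
  match n with
  | 0 => fun v _ x => prior q v x
  | n'.+1 => vmsg nb q (fmsg g (vmsgs g q n'))
  end.

(* m^{(n)}_{J -> v}, for n >= 1 *)
Definition fmsgs (R : realFieldType) (V F : finType) (nb : F -> {set V})
  (g : forall J : F, lconf (nb J) -> bool) (q : V -> R) (n : nat)
  : F -> V -> bool -> R :=
  fmsg g (vmsgs g q n.-1).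

(* marginal r^{(n)}_v(x), n >= 1 *)
Definition marg (R : realFieldType) (V F : finType) (nb : F -> {set V})
  (g : forall J : F, lconf (nb J) -> bool) (q : V -> R) (n : nat) (v : V) (x : bool) : R :=
  prior q v x * \prod_(J in adj nb v) fmsgs g q n J v x.

Definition decision (R : realFieldType) (V F : finType) (nb : F -> {set V})
  (g : forall J : F, lconf (nb J) -> bool) (q : V -> R) (n : nat) (v : V) : bool :=
  marg g q n v false <= marg g q n v true.

From HB Require Import structures.
From mathcomp Require Import all_boot all_order all_algebra.
From mathcomp Require Import ring lra.

Import Order.TTheory GRing.Theory Num.Theory.
Local Open Scope ring_scope.

(* Since [eps_v <= 1/2], every prior is largest at [x*] ("peaked at x*").  In a
   first-round factor message each of the at most [kappa_v] satisfying local
   configurations therefore weighs at most the term of [x*] restricted to [V_J],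
   which gives [m_{J->v}(1 - x*_v) <= kappa_v m_{J->v}(x*_v)].  Multiplying over
   the [|J_v|] factors of [v] loses [kappa_v ^ |J_v|], which [eps_v] was chosen
   to absorb: [eps_v kappa_v ^ |J_v| = 1 - eps_v < P_v(x*_v)]. *)

Definition peaked_at {R : realFieldType} {V : finType} (xs : V -> bool)
    (m : V -> bool -> R) : Prop :=
  forall y, 0 < m y (xs y) /\ forall b, 0 <= m y b <= m y (xs y).

Section Normalize.
Context {R : realFieldType}.
Implicit Type U : bool -> R.

Lemma normalize_gt0 U x :
  (forall y, 0 <= U y) -> 0 < U x -> 0 < normalize U x.
Proof.
move=> U_ge0 Ux_gt0; apply: divr_gt0 => //.
by have := U_ge0 (~~ x); case: x Ux_gt0 => /=; lra.
Qed.

Lemma normalize_le U a b (k : R) :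
  0 <= U false + U true -> U b <= k * U a -> normalize U b <= k * normalize U a.
Proof.
by move=> sum_ge0 Uab; rewrite /normalize mulrA ler_wpM2r // invr_ge0.
Qed.

End Normalize.

Section FactorMessage.
Context {R : realFieldType} {V F : finType} {nb : F -> {set V}}.
Context {g : forall J : F, lconf (nb J) -> bool} {xs : V -> bool}.
Variable mv : V -> F -> bool -> R.
Context {J : F}.
Variable v : V.
Hypothesis g_xs : g J (restr (nb J) xs).
Hypothesis mv_peaked : peaked_at xs (fun y => mv y J).

Let fweight (x : bool) : R :=
  \sum_(c : lconf (nb J) | [forall y, (val y == v) ==> (c y == x)])
     (g J c)%:R * \prod_(y : {y : V | y \in nb J} | val y != v) mv (val y) J (c y).

Let w_xs : R := \prod_(y : {y : V | y \in nb J} | val y != v) mv (val y) J (xs (val y)).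

Let term_ge0 (c : lconf (nb J)) :
  0 <= (g J c)%:R * \prod_(y : {y : V | y \in nb J} | val y != v) mv (val y) J (c y).
Proof.
rewrite mulr_ge0 ?ler0n //; apply: prodr_ge0 => y _.
by case: (mv_peaked (val y)) => _ /(_ (c y)) /andP[].
Qed.

Let fweight_ge0 x : 0 <= fweight x.
Proof. by apply: sumr_ge0 => c _; apply: term_ge0. Qed.

Let w_xs_gt0 : 0 < w_xs.
Proof. by apply: prodr_gt0 => y _; case: (mv_peaked (val y)). Qed.

Let fweight_xs_ge : w_xs <= fweight (xs v).
Proof.
rewrite /fweight (bigD1 (restr (nb J) xs)) /=; last first.
  by apply/forallP => y; apply/implyP => /eqP <-; rewrite ffunE.
rewrite g_xs mul1r; under eq_bigr => y _ do rewrite ffunE.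
by rewrite lerDl; apply: sumr_ge0 => c _; apply: term_ge0.
Qed.

Let fweight_le_card x : fweight x <= #|[set c | g J c]|%:R * w_xs.
Proof.
apply: (@le_trans _ _
  (\sum_(c : lconf (nb J) | [forall y, (val y == v) ==> (c y == x)]) (g J c)%:R * w_xs)).
  apply: ler_sum => c _; rewrite ler_wpM2l ?ler0n //.
  by apply: ler_prod => y _; case: (mv_peaked (val y)) => _ /(_ (c y)).
rewrite -mulr_suml; apply: ler_wpM2r; first exact: ltW w_xs_gt0.
rewrite -natr_sum ler_nat -sum1_card.
apply: (@leq_trans (\sum_(c : lconf (nb J)) g J c)).
  by rewrite big_mkcond /=; apply: leq_sum => c _; case: ifP.
by rewrite [X in (_ <= X)%N]big_mkcond /=; apply: leq_sum => c _; rewrite inE; case: (g J c).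
Qed.

Lemma fmsg_peaked :
  0 < fmsg g mv J v (xs v) /\
  forall b, 0 <= fmsg g mv J v b <= #|[set c | g J c]|%:R * fmsg g mv J v (xs v).
Proof.
have -> : fmsg g mv J v = normalize fweight by [].
have sum_ge0 : 0 <= fweight false + fweight true by rewrite addr_ge0.
split; first exact: normalize_gt0 fweight_ge0 (lt_le_trans w_xs_gt0 fweight_xs_ge).
move=> b; apply/andP; split; first by rewrite divr_ge0.
apply: normalize_le => //; apply: le_trans (fweight_le_card b) _.
by rewrite ler_wpM2l ?ler0n.
Qed.

End FactorMessage.

Section Epsilon.
Context {R : realFieldType} {V F : finType} {nb : F -> {set V}}.
Variables (g : forall J : F, lconf (nb J) -> bool) (v : V).

Let M : R := ((kappa g v) ^ #|adj nb v|)%N%:R.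

Lemma eps_mul_kappa : eps R g v * M = 1 - eps R g v.
Proof.
have M_gt : 0 < 1 + M by rewrite ltr_pwDl ?ler0n.
by rewrite /eps -/M; field; rewrite gt_eqF.
Qed.

Lemma eps_gt0 : 0 < eps R g v.
Proof. by rewrite /eps divr_gt0 // ltr_pwDl ?ler0n. Qed.

Lemma eps_le_half : (0 < kappa g v)%N -> eps R g v <= 1 / 2.
Proof.
move=> kappa_gt0; have M_ge1 : 1 <= M by rewrite /M ler1n expn_gt0 kappa_gt0.
have := eps_mul_kappa; have := eps_gt0; nra.
Qed.

End Epsilon.

Lemma kappa_gt0 {V F : finType} {nb : F -> {set V}}
    {g : forall J : F, lconf (nb J) -> bool} {xs : V -> bool} {v : V} :
  adj nb v != set0 -> (forall J, g J (restr (nb J) xs)) -> (0 < kappa g v)%N.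
Proof.
case/set0Pn=> J J_v g_xs; apply: leq_trans (leq_bigmax_cond _ J_v).
by apply/card_gt0P; exists (restr (nb J) xs); rewrite inE.
Qed.

Definition admissible_prior {R : realFieldType} {V F : finType} {nb : F -> {set V}}
    (g : forall J : F, lconf (nb J) -> bool) (q : V -> R) (xs : V -> bool) : Prop :=
  forall v, if xs v then 0 <= q v < eps R g v
            else (1 - eps R g v < q v) && (q v <= 1).

Section FirstIteration.
Context {R : realFieldType} {V F : finType} {nb : F -> {set V}}.
Context {g : forall J : F, lconf (nb J) -> bool} {q : V -> R} {xs : V -> bool}.
Hypothesis adj_neq0 : forall v, adj nb v != set0.
Hypothesis g_xs : forall J, g J (restr (nb J) xs).
Hypothesis q_adm : admissible_prior g q xs.

Lemma prior_lt_eps v : prior q v (~~ xs v) < eps R g v.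
Proof. by have := q_adm v; rewrite /prior; case: (xs v) => /= /andP[]; lra. Qed.

Lemma prior_gt_1_eps v : 1 - eps R g v < prior q v (xs v).
Proof. by have := q_adm v; rewrite /prior; case: (xs v) => /= /andP[]; lra. Qed.

Lemma prior_peaked : peaked_at xs (prior q).
Proof.
move=> y; have e_half : eps R g y <= 1 / 2.
  exact: eps_le_half (kappa_gt0 (adj_neq0 y) g_xs).
have := q_adm y; rewrite /prior.
by case: (xs y) => /= /andP[? ?]; (split; [lra | case=> /=; apply/andP; split; lra]).
Qed.

Lemma fmsgs1_peaked v J : J \in adj nb v ->
  0 < fmsgs g q 1 J v (xs v) /\
  0 <= fmsgs g q 1 J v (~~ xs v) <= (kappa g v)%:R * fmsgs g q 1 J v (xs v).
Proof.
move=> J_v; have [xs_gt0 le_card] := fmsg_peaked (vmsgs g q 0) v (g_xs J) prior_peaked.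
split=> //; have /andP[-> /le_trans->] // := le_card (~~ xs v).
by rewrite ler_wpM2r ?(ltW xs_gt0) // ler_nat (leq_bigmax_cond _ J_v).
Qed.

Lemma marg1_xs_gt v : marg g q 1 v (~~ xs v) < marg g q 1 v (xs v).
Proof.
set A := \prod_(J in adj nb v) fmsgs g q 1 J v (xs v).
have A_gt0 : 0 < A by apply: prodr_gt0 => J /fmsgs1_peaked[].
have prod_le : \prod_(J in adj nb v) fmsgs g q 1 J v (~~ xs v)
               <= ((kappa g v) ^ #|adj nb v|)%N%:R * A.
  by rewrite natrX -prodrMl; apply: ler_prod => J /fmsgs1_peaked[_].
have prior_ge0 : 0 <= prior q v (~~ xs v).
  by case: (prior_peaked v) => _ /(_ (~~ xs v)) /andP[].
rewrite /marg -/A; apply: le_lt_trans (ler_wpM2l prior_ge0 prod_le) _.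
rewrite mulrA ltr_pM2r //; apply: le_lt_trans (prior_gt_1_eps v).
rewrite -(eps_mul_kappa g v); apply: ler_wpM2r; first exact: ler0n.
exact: ltW (prior_lt_eps v).
Qed.

End FirstIteration.

Theorem lemma1 (R : realFieldType) (V F : finType) (nb : F -> {set V})
  (g : forall J : F, lconf (nb J) -> bool) (q : V -> R) (xs : V -> bool) :
  (forall J : F, nb J != set0) ->
  (forall v : V, adj nb v != set0) ->
  (forall J : F, g J (restr (nb J) xs)) ->
  (forall v : V, if xs v then 0 <= q v < eps R g v
                 else (1 - eps R g v < q v) && (q v <= 1)) ->
  forall v : V,
    marg g q 1 v (xs v) > marg g q 1 v (~~ xs v) /\ decision g q 1 v = xs v.
Proof.
move=> _ adj_neq0 g_xs q_adm v; have lt_marg := marg1_xs_gt adj_neq0 g_xs q_adm v.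
split=> //; rewrite /decision.
by case: (xs v) lt_marg => /= lt_marg; [exact: ltW | rewrite leNgt lt_marg].
Qed.
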